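(* Let $\Omega$ be a finite token alphabet and let $R$ be a 0-th order acceptance probability distribution on indices $\{1,\dots,|\Omega|\}$. Fix a number of drafted tokens $k$, let $\tau^*_k$ be the optimal drafting tree with $k+1$ vertices, and let $d=\max_{\mathbf{j}\in\tau^*_k}\max_i\{i: i\in\mathbf{j}\}$ be the maximum index appearing in $\tau^*_k$. Let $p_{res}=1-\sum_{i=1}^d R(i)$ and define the distribution $R^{res}$ on $\{1,\dots,d+1\}$ by $R^{res}(i)=R(i)$ for $i\le d$ and $R^{res}(d+1)=p_{res}$. Then for every integer $m\ge \frac{p_{res}}{\min_{i\le d}R(i)}$, $$\mathbb{E}[\#\text{ generated tokens}]\le \frac{\log(d+m)+\log(k+1)}{H(R^{res})+p_{res}\log m}.$$
   Context: A drafting tree is a finite, prefix-closed set of finite index sequences $\mathbf{j}=(j_1,\dots,j_l)$, $j_i\in\{1,\dots,|\Omega|\}$, containing the empty sequence (root); each non-root vertex is a drafted token, and $j_i$ indexes which drafted alternative is taken at depth $i$. Under the 0-th order assumption, at each generated position the index of the accepted drafted alternative is drawn independently from $R$, so vertex $\mathbf{j}$ is accepted with probability $R(\mathbf{j})=\prod_{i}R(j_i)$. Generation follows accepted vertices until no child in the tree is accepted, and then one more token is sampled from the target model; the number of generated tokens is the number of accepted drafted tokens plus one. The optimal tree with $k+1$ vertices maximizes $\sum_{\mathbf{j}\in\tau}R(\mathbf{j})$ over trees $\tau$ with $|\tau|=k+1$. $H$ denotes Shannon entropy, with $\log$ in the same base. *)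

From HB Require Import structures.
From mathcomp Require Import all_boot all_order all_algebra.
From mathcomp Require Import reals exp.
Set Implicit Arguments. Unset Strict Implicit. Unset Printing Implicit Defensive.
Import Order.TTheory GRing.Theory Num.Theory.
Local Open Scope ring_scope.

Definition is_drafting_tree (n : nat) (t : seq (seq nat)) : bool :=
  [&& uniq t, [::] \in t,
      all (fun s => all (fun j => (0 < j <= n)%N) s) t &
      all (fun s => all (fun i => take i s \in t) (iota 0 (size s))) t].

Section Defs.
Variable R : realType.

(* R(j) = prod_i R(j_i): probability that vertex j is accepted (0-th order). *)
Definition path_prob (Rd : nat -> R) (s : seq nat) : R := \prod_(j <- s) Rd j.

Definition tree_value (Rd : nat -> R) (t : seq (seq nat)) : R :=
  \sum_(s <- t) path_prob Rd s.

(* E[# generated tokens] = 1 + E[# accepted drafted tokens]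
   = sum over vertices (root included, R(root)=1) of P(vertex accepted),
   by linearity of expectation. *)
Definition expected_tokens (Rd : nat -> R) (t : seq (seq nat)) : R :=
  tree_value Rd t.

Definition optimal_tree (n k : nat) (Rd : nat -> R) (t : seq (seq nat)) : Prop :=
  [/\ is_drafting_tree n t, size t = k.+1 &
      forall t', is_drafting_tree n t' -> size t' = k.+1 ->
                 tree_value Rd t' <= tree_value Rd t].

Definition plogp (x : R) : R := if x == 0 then 0 else x * ln x.

End Defs.

Definition max_index (t : seq (seq nat)) : nat :=
  \max_(s <- t) \max_(j <- s) j.

From HB Require Import structures.
From mathcomp Require Import all_boot all_order all_algebra.
From mathcomp Require Import reals exp.
From mathcomp Require Import ring lra.
Import Order.TTheory GRing.Theory Num.Theory.
Set Implicit Arguments. Unset Strict Implicit. Unset Printing Implicit Defensive.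
Local Open Scope ring_scope.

(** Generation leaves the tree at an exit: a vertex [v] together with a child
    index [a <= d] missing from the tree (probability [R(v) R(a)]), or together
    with all indices [> d] at once (probability [R(v) p_res]).  By conservation
    of flow these probabilities sum to one, and the same telescoping turns the
    sum of [w log w] over the exits into [-E H(R^res)].  Counting each residual
    exit as [m] virtual children of equal mass adds [E p_res log m], so
    [E (H(R^res) + p_res log m)] is bounded, by the log-sum inequality, by the
    log of the number [(k+1)(d+m)] of such children. *)

Section Entropy.
Variable R : realType.
Implicit Types w x y : R.

Lemma plogp0 : plogp (0 : R) = 0.
Proof. by rewrite /plogp eqxx. Qed.

Lemma plogp1 : plogp (1 : R) = 0.
Proof. by rewrite /plogp oner_eq0 ln1 mulr0. Qed.

Lemma plogpM x y : 0 <= x -> 0 <= y -> plogp (x * y) = x * plogp y + y * plogp x.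
Proof.
rewrite le0r => /predU1P[->|x0]; first by rewrite mul0r plogp0 mul0r mulr0 addr0.
rewrite le0r => /predU1P[->|y0]; first by rewrite mulr0 plogp0 mulr0 mul0r addr0.
by rewrite /plogp mulf_eq0 !gt_eqF //= lnM ?posrE //; ring.
Qed.

Lemma mulr_ln_sub_plogp_le w y : 0 <= w -> 0 <= y -> (0 < w -> 0 < y) ->
  w * ln y - plogp w <= y - w.
Proof.
rewrite le0r => /predU1P[-> y0 _|w0 _ /(_ w0) y0]; first by rewrite plogp0 mul0r !subr0.
have yw_gt0 : 0 < y / w by rewrite divr_gt0.
have ln_le : ln y - ln w <= y / w - 1.
  by rewrite -ln_div ?posrE // -[X in ln X](subrK 1) addrC le_ln1Dx //; lra.
have := ler_wpM2l (ltW w0) ln_le.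
by rewrite /plogp gt_eqF // mulrBr mulrBr mulr1 mulrCA divff ?gt_eqF // mulr1.
Qed.

Lemma log_sum_inequality (I : eqType) (r : seq I) (w x : I -> R) (c : R) :
  {in r, forall i, 0 <= w i} -> {in r, forall i, 0 <= x i} ->
  {in r, forall i, 0 < w i -> 0 < x i} -> \sum_(i <- r) w i = 1 ->
  0 < c -> \sum_(i <- r) x i <= c ->
  \sum_(i <- r) (w i * ln (x i) - plogp (w i)) <= ln c.
Proof.
move=> w0 x0 wx w1 c0 xc.
have term_le i : i \in r ->
    w i * ln (x i) - plogp (w i) <= x i / c - w i + w i * ln c.
  move=> ir; have := mulr_ln_sub_plogp_le (w0 i ir) (divr_ge0 (x0 i ir) (ltW c0))
    (fun wi => divr_gt0 (wx i ir wi) c0).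
  have : w i * ln (x i / c) = w i * ln (x i) - w i * ln c.
    have := w0 i ir; rewrite le0r => /predU1P[->|wi]; first by rewrite !mul0r subr0.
    by rewrite ln_div ?posrE ?wx // mulrBr.
  lra.
rewrite big_seq (le_trans (ler_sum _ term_le)) // -big_seq !big_split /=.
rewrite sumrN -!mulr_suml w1 mul1r gerDr subr_le0.
by rewrite ler_pdivrMr // mul1r.
Qed.

End Entropy.

Section TreeSums.
Variables (R : realType) (d : nat) (t : seq (seq nat)).
Hypothesis t_uniq : uniq t.
Hypothesis t_root : [::] \in t.
Hypothesis t_parent : forall v a, rcons v a \in t -> v \in t.
Hypothesis t_index : {in t, forall s, {in s, forall j, (0 < j <= d)%N}}.

Lemma sum_children (f : seq nat -> R) :
  \sum_(v <- t) \sum_(1 <= a < d.+1 | rcons v a \in t) f (rcons v a) =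
  \sum_(u <- t | u != [::]) f u.
Proof.
have -> s : \sum_(v <- s) \sum_(1 <= a < d.+1 | rcons v a \in t) f (rcons v a) =
    \sum_(u <- [seq rcons v a | v <- s, a <- index_iota 1 d.+1] | u \in t) f u.
  by elim: s => [|v s IH]; rewrite ?big_nil // big_cat big_cons IH big_map.
rewrite -big_filter -[RHS]big_filter; apply/perm_big/uniq_perm.
- rewrite filter_uniq // allpairs_uniq ?iota_uniq //.
  by move=> [v a] [w b] _ _ /= /rcons_inj [-> ->].
- by rewrite filter_uniq.
move=> u; rewrite !mem_filter; case/lastP: u => [|v a].
  by rewrite eqxx; case: allpairsP => [[[v a] [_ _]]|]; [case: v | rewrite andbF].
rewrite -size_eq0 size_rcons /=; case vat: (rcons v a \in t) => //=.
apply/allpairsP; exists (v, a); split => //=; first exact: t_parent vat.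
by rewrite mem_index_iota ltnS; apply: t_index vat _ _; rewrite mem_rcons mem_head.
Qed.

Lemma sum_missing_children (f g h : seq nat -> R) :
  {in t, forall v, g v + \sum_(1 <= a < d.+1) f (rcons v a) = f v - h v} ->
  \sum_(v <- t) (g v + \sum_(1 <= a < d.+1 | rcons v a \notin t) f (rcons v a)) =
  f [::] - \sum_(v <- t) h v.
Proof.
move=> balance; rewrite big_seq (eq_bigr (fun v =>
    f v - h v - \sum_(1 <= a < d.+1 | rcons v a \in t) f (rcons v a))) => [|v vt].
  by rewrite -big_seq !sumrB sum_children (bigD1_seq [::]) //=; ring.
by rewrite -balance // [in RHS](bigID (fun a => rcons v a \in t)) /=; ring.
Qed.

End TreeSums.

Lemma drafting_tree_parent n t v a :
  is_drafting_tree n t -> rcons v a \in t -> v \in t.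
Proof.
case/and4P => _ _ _ /allP prefix /[dup] vat /prefix /allP/(_ (size v)).
by rewrite mem_iota size_rcons ltnSn -cats1 take_size_cat //; apply.
Qed.

Lemma drafting_tree_index n t : is_drafting_tree n t ->
  {in t, forall s, {in s, forall j, (0 < j <= max_index t)%N}}.
Proof.
case/and4P => _ _ /allP range _ s st j js.
have /allP/(_ j js)/andP[-> _] := range s st.
apply: leq_trans (leq_bigmax_seq (F := id) j js isT) _.
exact: (leq_bigmax_seq (F := fun s => \max_(j <- s) j) s st isT).
Qed.

Lemma max_index_le n t : is_drafting_tree n t -> (max_index t <= n)%N.
Proof.
case/and4P => _ _ /allP range _; apply/bigmax_leqP_seq => s st _.
by apply/bigmax_leqP_seq => j js _; have /allP/(_ j js)/andP[] := range s st.
Qed.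

(** An exit of [t] is a vertex [v] paired with [Some a] for a child index
    [a <= d] absent from [t], or with [None] for all indices [> d] at once;
    [exit_weight m] counts the residual exit as [m] virtual children. *)
Definition exits (d : nat) (t : seq (seq nat)) : seq (seq nat * option nat) :=
  [seq (v, o) | v <- t,
     o <- None :: [seq Some a | a <- index_iota 1 d.+1 & rcons v a \notin t]].

Lemma mem_exits d t v o : (v, o) \in exits d t ->
  v \in t /\ (if o is Some a then (0 < a <= d)%N else True).
Proof.
case/allpairsPdep => w [p [wt]]; rewrite inE => /predU1P[-> [-> ->] //|].
by case/mapP => a; rewrite mem_filter mem_index_iota ltnS => /andP[_ ad] -> [-> ->].
Qed.

Section Exits.
Variable R : realType.
Implicit Types (Rd : nat -> R) (d m : nat) (t : seq (seq nat)).

Definition residual_prob Rd d : R := 1 - \sum_(1 <= i < d.+1) Rd i.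

Definition residual_entropy Rd d : R :=
  - (\sum_(1 <= i < d.+1) plogp (Rd i)) - plogp (residual_prob Rd d).

Definition exit_prob Rd d (e : seq nat * option nat) : R :=
  path_prob Rd e.1 * (if e.2 is Some a then Rd a else residual_prob Rd d).

Definition exit_weight m (e : seq nat * option nat) : R :=
  if e.2 is Some _ then 1 else m%:R.

Lemma residual_prob_ge0 Rd n d :
  (forall i, (0 < i <= n)%N -> 0 <= Rd i) -> \sum_(1 <= i < n.+1) Rd i = 1 ->
  (d <= n)%N -> 0 <= residual_prob Rd d.
Proof.
move=> Rd_ge0 Rd_sum1 dn; rewrite /residual_prob subr_ge0 -Rd_sum1.
rewrite (big_cat_nat _ (n := d.+1) (p := n.+1)) ?ltnS //= lerDl big_nat.
rewrite sumr_ge0 // => i /andP[di ilt]; apply/Rd_ge0/andP.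
by split; [exact: leq_ltn_trans di | rewrite -ltnS].
Qed.

Lemma exit_weight_ge0 m e : 0 <= exit_weight m e.
Proof. by case: e => ? [?|]; rewrite /exit_weight /= ?ler01 ?ler0n. Qed.

Lemma big_exits d t (F : seq nat * option nat -> R) :
  \sum_(e <- exits d t) F e =
  \sum_(v <- t)
    (F (v, None) + \sum_(1 <= a < d.+1 | rcons v a \notin t) F (v, Some a)).
Proof.
by rewrite big_allpairs_dep; apply: eq_bigr => v _; rewrite big_cons big_map big_filter.
Qed.

Lemma path_prob_rcons Rd v a : path_prob Rd (rcons v a) = path_prob Rd v * Rd a.
Proof. by rewrite /path_prob -cats1 big_cat big_seq1. Qed.

Lemma sum_exit_prob_ln_weight Rd d t m :
  \sum_(e <- exits d t) exit_prob Rd d e * ln (exit_weight m e) =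
  tree_value Rd t * residual_prob Rd d * ln m%:R.
Proof.
rewrite big_exits /tree_value !mulr_suml; apply: eq_bigr => v _ /=.
by rewrite big1 ?addr0 // => a _; rewrite ln1 mulr0.
Qed.

Lemma sum_exit_weight d t m :
  \sum_(e <- exits d t) exit_weight m e <= (size t * (d + m))%:R.
Proof.
have missing_le v : \sum_(1 <= a < d.+1 | rcons v a \notin t) (1 : R) <= d%:R.
  apply: (@le_trans _ _ (\sum_(1 <= a < d.+1) (1 : R))).
    by rewrite big_mkcond; apply: ler_sum => a _; case: ifP.
  by rewrite sumr_const_nat subn1.
rewrite big_exits.
rewrite (le_trans (ler_sum _ (fun v _ => lerD (lexx m%:R) (missing_le v)))) //.
by rewrite big_const_seq count_predT iter_addr_0 -natrD -mulrnA mulnC addnC.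
Qed.

End Exits.
Arguments exit_weight {R} m.

Section ExitDistribution.
Variables (R : realType) (Rd : nat -> R) (d : nat) (t : seq (seq nat)).
Hypothesis t_uniq : uniq t.
Hypothesis t_root : [::] \in t.
Hypothesis t_parent : forall v a, rcons v a \in t -> v \in t.
Hypothesis t_index : {in t, forall s, {in s, forall j, (0 < j <= d)%N}}.
Hypothesis Rd_ge0 : forall i, (0 < i <= d)%N -> 0 <= Rd i.
Hypothesis residual_ge0 : 0 <= residual_prob Rd d.

Lemma path_prob_ge0 v : v \in t -> 0 <= path_prob Rd v.
Proof.
by move=> vt; rewrite /path_prob big_seq prodr_ge0 // => j /(t_index vt)/Rd_ge0.
Qed.

Lemma exit_prob_ge0 : {in exits d t, forall e, 0 <= exit_prob Rd d e}.
Proof.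
move=> [v o] /mem_exits[vt ho]; rewrite /exit_prob mulr_ge0 ?path_prob_ge0 //.
by case: o ho => [a /Rd_ge0|].
Qed.

Lemma exit_weight_gt0 m : (0 < residual_prob Rd d -> (0 < m)%N) ->
  {in exits d t, forall e, 0 < exit_prob Rd d e -> (0 : R) < exit_weight m e}.
Proof.
move=> m_gt0 [v [a|]] _ //=; rewrite /exit_prob /= ltr0n.
by move: residual_ge0; rewrite le0r => /predU1P[->|/m_gt0 //]; rewrite mulr0 ltxx.
Qed.

Lemma sum_exit_prob : \sum_(e <- exits d t) exit_prob Rd d e = 1.
Proof.
rewrite big_exits /exit_prob /=.
under eq_bigr do under eq_bigr do rewrite -path_prob_rcons.
rewrite (sum_missing_children t_uniq t_root t_parent t_index (h := fun=> 0)).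
  by rewrite big1 // subr0 /path_prob big_nil.
move=> v _; under eq_bigr do rewrite path_prob_rcons.
by rewrite -mulr_sumr -mulrDr /residual_prob subrK mulr1 subr0.
Qed.

Lemma sum_plogp_exit_prob :
  \sum_(e <- exits d t) plogp (exit_prob Rd d e) =
  - (tree_value Rd t * residual_entropy Rd d).
Proof.
rewrite big_exits /exit_prob /=.
under eq_bigr do under eq_bigr do rewrite -path_prob_rcons.
rewrite (sum_missing_children t_uniq t_root t_parent t_index
  (f := fun v => plogp (path_prob Rd v))
  (h := fun v => path_prob Rd v * residual_entropy Rd d)).
  by rewrite /= /path_prob big_nil plogp1 /tree_value mulr_suml sub0r.
move=> v vt /=; have Pv_ge0 := path_prob_ge0 vt.
rewrite big_nat (eq_bigr (fun a =>
    path_prob Rd v * plogp (Rd a) + Rd a * plogp (path_prob Rd v))) => [|a ad];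
  last by rewrite path_prob_rcons plogpM // Rd_ge0.
have sumRd : \sum_(1 <= a < d.+1) Rd a = 1 - residual_prob Rd d.
  by rewrite /residual_prob opprB addrC subrK.
rewrite -big_nat big_split -mulr_sumr -mulr_suml sumRd plogpM // /residual_entropy /=.
ring.
Qed.

End ExitDistribution.

Theorem lemma2 (R : realType) (Omega : finType) (Rd : nat -> R) (k : nat)
    (t : seq (seq nat)) (m : nat) :
  (forall i, (0 < i <= #|Omega|)%N -> 0 <= Rd i) ->
  \sum_(1 <= i < #|Omega|.+1) Rd i = 1 ->
  optimal_tree #|Omega| k Rd t ->
  let d := max_index t in
  let pres := 1 - \sum_(1 <= i < d.+1) Rd i in
  let H_res := - (\sum_(1 <= i < d.+1) plogp (Rd i)) - plogp pres in
  (* m >= pres / min_{i <= d} R(i) *)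
  (forall i, (1 <= i <= d)%N -> pres <= m%:R * Rd i) ->
  expected_tokens Rd t * (H_res + pres * ln (m%:R : R))
    <= ln ((d + m)%:R : R) + ln ((k + 1)%:R : R).
Proof.
move=> Rd_ge0 Rd_sum1 [t_tree t_size _] d pres H_res m_ge.
have [t_uniq t_root _ _] := and4P t_tree.
have t_parent := drafting_tree_parent t_tree.
have t_index := drafting_tree_index t_tree.
have d_le := max_index_le t_tree.
have Rd_ge0_d i : (0 < i <= d)%N -> 0 <= Rd i.
  by case/andP=> i_gt0 id; rewrite Rd_ge0 // i_gt0 (leq_trans id d_le).
have pres_ge0 : 0 <= pres := residual_prob_ge0 Rd_ge0 Rd_sum1 d_le.
case: (posnP (d + m)) => [/eqP | dm_gt0].
  rewrite addn_eq0 => /andP[/eqP d0 /eqP m0].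
  rewrite /H_res /pres d0 m0 !big_geq //= !subr0 plogp1 addn0 (@ln0 _ 0%:R) //.
  have : 0 <= ln ((k + 1)%:R : R) by rewrite ln_ge0 // ler1n addn1.
  lra.
have m_gt0 : 0 < pres -> (0 < m)%N.
  case: (posnP d) => [d0 _ | d_gt0 pres_gt0]; first by rewrite d0 in dm_gt0.
  rewrite lt0n; apply/eqP => m0; move: (m_ge 1%N d_gt0).
  by rewrite m0 mul0r leNgt pres_gt0.
have c_gt0 : (0 : R) < (size t * (d + m))%:R by rewrite ltr0n t_size muln_gt0 dm_gt0.
have := log_sum_inequality (exit_prob_ge0 t_index Rd_ge0_d pres_ge0)
  (fun e _ => exit_weight_ge0 R m e) (exit_weight_gt0 pres_ge0 m_gt0)
  (sum_exit_prob Rd t_uniq t_root t_parent t_index) c_gt0 (sum_exit_weight R d t m).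
rewrite sumrB sum_exit_prob_ln_weight.
rewrite (sum_plogp_exit_prob t_uniq t_root t_parent t_index Rd_ge0_d pres_ge0).
rewrite t_size natrM lnM ?posrE ?ltr0n // addn1 /expected_tokens.
rewrite -[residual_prob _ _]/pres -[residual_entropy _ _]/H_res; lra.
Qed.
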